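(* Let $m_x,m_y$ be positive integers, $\Delta\xi,\Delta\eta>0$, and let $\vec X:\mathbb R^2\to\mathbb R^2$ be a smooth map with nowhere vanishing Jacobian determinant such that $\vec X(\xi+m_x\Delta\xi,\eta)-\vec X(\xi,\eta)$ and $\vec X(\xi,\eta+m_y\Delta\eta)-\vec X(\xi,\eta)$ are constant vectors. Index pressure points by $(i,j)\in\mathbb Z_{m_x}\times\mathbb Z_{m_y}$ (indices taken modulo $m_x$, $m_y$), with weights ${\tt dVc}_{i,j}=\Delta\xi\Delta\eta\,|\det D\vec X(i\Delta\xi,j\Delta\eta)|$. Suppose that at every east face $(i,j)$, with computational location $\vec\xi^e_{i,j}=((i+\tfrac12)\Delta\xi,j\Delta\eta)$, a vector $\vec u^e_{i,j}\in\mathbb R^2$ is given, and at every north face $(i,j)$, with location $\vec\xi^n_{i,j}=(i\Delta\xi,(j+\tfrac12)\Delta\eta)$, a vector $\vec u^n_{i,j}\in\mathbb R^2$ is given. For $\varepsilon\in\{\tfrac12,\tfrac32,\dots\}$ define $$\overline{F}^e_{i,j}(\varepsilon)=-\frac{1}{\varepsilon}\Big(\vec X\big(\vec\xi^e_{i,j}+\varepsilon(0,\Delta\eta)\big)-\vec X\big(\vec\xi^e_{i,j}-\varepsilon(0,\Delta\eta)\big)\Big)^\perp\cdot\vec u^e_{i,j},$$ $$\overline{F}^n_{i,j}(\varepsilon)=\frac{1}{\varepsilon}\Big(\vec X\big(\vec\xi^n_{i,j}+\varepsilon(\Delta\xi,0)\big)-\vec X\big(\vec\xi^n_{i,j}-\varepsilon(\Delta\xi,0)\big)\Big)^\perp\cdot\vec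 u^n_{i,j},$$ where $(a,b)^\perp=(-b,a)$, and for a positive integer $K$ and real coefficients $\alpha(\tfrac12),\dots,\alpha(K-\tfrac12)$ define $$({\sf DIV})_{i,j}=\frac{1}{2\,{\tt dVc}_{i,j}}\sum_{\varepsilon\in\{1/2,\dots,K-1/2\}}\alpha(\varepsilon)\Big(\overline F^e_{i+\varepsilon-1/2,\,j}(\varepsilon)-\overline F^e_{i-\varepsilon-1/2,\,j}(\varepsilon)+\overline F^n_{i,\,j+\varepsilon-1/2}(\varepsilon)-\overline F^n_{i,\,j-\varepsilon-1/2}(\varepsilon)\Big).$$ Then (a) $\sum_{i,j}{\tt dVc}_{i,j}({\sf DIV})_{i,j}=0$ for all choices of the face vectors; and (b) if there is a constant $\vec c\in\mathbb R^2$ with $\vec u^e_{i,j}=\vec u^n_{i,j}=\vec c$ for all $(i,j)$, then $({\sf DIV})_{i,j}=0$ for all $(i,j)$.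
   Context: This is the finite-difference discrete divergence on a periodic, structured, curvilinear staggered 2D grid: the face vectors $\vec u^e,\vec u^n$ are the full velocity vectors reconstructed at the faces from staggered grid-aligned velocity components by interpolations that are exact for constant vector fields, so that for the discrete representation of a constant vector field $\vec c$ they all equal $\vec c$. Property (a) is the discrete statement that the integral of a divergence vanishes; property (b) is the statement that the discrete divergence of a constant vector field vanishes. *)

From mathcomp Require Import all_boot all_algebra all_classical all_reals all_analysis.
Import GRing.Theory Num.Theory.
Import numFieldNormedType.Exports.

Set Implicit Arguments. Unset Strict Implicit. Unset Printing Implicit Defensive.
Local Open Scope ring_scope.

Section Defs.
Variable R : realType.

Definition perp (v : R * R) : R * R := (- v.2, v.1).
Definition dot (u v : R * R) : R := u.1 * v.1 + u.2 * v.2.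

Fixpoint iterD (ds : seq (R * R)) (f : R * R -> R * R) : R * R -> R * R :=
  match ds with
  | [::] => f
  | v :: ds' => fun p => 'D_v (iterD ds' f) p
  end.

Definition smooth (f : R * R -> R * R) : Prop :=
  forall (ds : seq (R * R)) (p : R * R), differentiable (iterD ds f) p.

Definition jacdet (f : R * R -> R * R) (p : R * R) : R :=
  let a := 'D_((1 : R), (0 : R)) f p in
  let b := 'D_((0 : R), (1 : R)) f p in
  a.1 * b.2 - a.2 * b.1.

Definition wrap (m : nat) (k : int) : nat := `|(k %% (m : int))%Z|%N.

Definition dVc (dxi deta : R) (X : R * R -> R * R) (i j : nat) : R :=
  dxi * deta * `|jacdet X (i%:R * dxi, j%:R * deta)|.

Definition Fe (mx my : nat) (dxi deta : R) (X : R * R -> R * R)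
    (ue : nat -> nat -> R * R) (k l : int) (eps : R) : R :=
  let i := wrap mx k in let j := wrap my l in
  let p := ((i%:R + 1 / 2) * dxi, j%:R * deta) in
  - (1 / eps) *
    dot (perp (X (p.1, p.2 + eps * deta) - X (p.1, p.2 - eps * deta))) (ue i j).

Definition Fn (mx my : nat) (dxi deta : R) (X : R * R -> R * R)
    (un : nat -> nat -> R * R) (k l : int) (eps : R) : R :=
  let i := wrap mx k in let j := wrap my l in
  let p := (i%:R * dxi, (j%:R + 1 / 2) * deta) in
  (1 / eps) *
    dot (perp (X (p.1 + eps * dxi, p.2) - X (p.1 - eps * dxi, p.2))) (un i j).

(* discrete divergence; eps ranges over k + 1/2 for k < K and
   alpha k stands for alpha(k + 1/2).  With eps = k + 1/2:
   i + eps - 1/2 = i + k,  i - eps - 1/2 = i - k - 1. *)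
Definition DIV (mx my : nat) (dxi deta : R) (X : R * R -> R * R) (K : nat)
    (alpha : nat -> R) (ue un : nat -> nat -> R * R) (i j : nat) : R :=
  1 / (2 * dVc dxi deta X i j) *
  \sum_(k < K)
    let eps := k%:R + 1 / 2 in
    alpha k *
      (Fe mx my dxi deta X ue (i%:Z + k%:Z) j eps
       - Fe mx my dxi deta X ue (i%:Z - k%:Z - 1) j eps
       + Fn mx my dxi deta X un i (j%:Z + k%:Z) eps
       - Fn mx my dxi deta X un i (j%:Z - k%:Z - 1) eps).

End Defs.

(* Part (a) is summation by parts: every flux is periodic in its face index, so
   the sum over one period of F(i + s) - F(i + t) vanishes for every offset.
   Part (b): the index wrap-around is undone by the period shifts of X, which
   cancel in the differences X(p) - X(q) entering a flux.  The four fluxes of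
   width eps at (i, j) are then those through the four sides of the
   quadrilateral with corners X(i dxi +- eps dxi, j deta +- eps deta), and since
   v |-> v^perp . c is linear they telescope to 0 around its boundary. *)

From Pilot Require Import Defs.
From mathcomp Require Import all_boot all_algebra all_classical all_reals all_analysis.
From mathcomp Require Import ring.
Import GRing.Theory Num.Theory.
Import numFieldNormedType.Exports.

Set Implicit Arguments.
Unset Strict Implicit.
Unset Printing Implicit Defensive.
Local Open Scope ring_scope.

Lemma sum_shift_periodic (V : nmodType) (m : nat) (f : int -> V) :
  (forall k, f (k + m%:Z) = f k) ->
  forall s : int, \sum_(i < m) f (i%:Z + s) = \sum_(i < m) f i%:Z.
Proof.
move=> f_per.
have shift1 s : \sum_(i < m) f (i%:Z + (s + 1)) = \sum_(i < m) f (i%:Z + s).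
  case: m f_per => [|m] f_per; first by rewrite !big_ord0.
  rewrite big_ord_recr big_ord_recl /= add0r addrC.
  have -> : m%:Z + (s + 1) = s + m.+1%:Z by rewrite addrCA -PoszD addn1.
  rewrite f_per; congr (_ + _); apply: eq_bigr => i _.
  by rewrite /bump /= add1n -addn1 PoszD addrAC addrA.
elim/int_rec => [|n IHn|n IHn]; first by under eq_bigr do rewrite addr0.
  by rewrite -addn1 PoszD shift1.
by rewrite -IHn -shift1 -addn1 PoszD opprD addrNK.
Qed.

Lemma sumB_shift_periodic (V : zmodType) (m : nat) (f : int -> V) (s t : int) :
  (forall k, f (k + m%:Z) = f k) ->
  \sum_(i < m) (f (i%:Z + s) - f (i%:Z + t)) = 0.
Proof. by move=> f_per; rewrite sumrB !sum_shift_periodic ?subrr. Qed.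

Lemma quasiperiodic_shift (R : pzRingType) (V : zmodType) (g : R -> V) (T : R) (a : V) :
  (forall x, g (x + T) - g x = a) ->
  forall (n : int) (x : R), g (x + n%:~R * T) = g x + a *~ n.
Proof.
move=> g_step.
have g_next y : g (y + T) = g y + a by rewrite -(g_step y) addrCA subrr addr0.
have g_nat (n : nat) x : g (x + n%:R * T) = g x + a *+ n.
  elim: n => [|n IHn]; first by rewrite mul0r !addr0.
  by rewrite mulrSr mulrDl mul1r addrA g_next IHn mulrSr addrA.
case=> n x; first exact: g_nat.
have := g_nat n.+1 (x - n.+1%:R * T); rewrite subrK => ->.
by rewrite NegzE intrN mulNr mulrNz -[a *~ _]/(a *+ n.+1) addrK.
Qed.

Lemma quasiperiodic_shiftB (R : pzRingType) (V : zmodType) (g h : R -> V) (T : R) (a : V) :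
  (forall x, g (x + T) - g x = a) -> (forall x, h (x + T) - h x = a) ->
  forall (n : int) (x : R), g (x + n%:~R * T) - h (x + n%:~R * T) = g x - h x.
Proof.
move=> g_step h_step n x.
by rewrite (quasiperiodic_shift g_step) (quasiperiodic_shift h_step) opprD addrACA subrr addr0.
Qed.

Lemma wrap_lt (m : nat) (k : int) : (0 < m)%N -> (Defs.wrap m k < m)%N.
Proof.
move=> m_gt0; rewrite /Defs.wrap -ltz_nat gez0_abs ?modz_ge0 ?ltz_pmod //.
by rewrite eqz_nat -lt0n.
Qed.

Lemma wrap_small (m j : nat) : (j < m)%N -> Defs.wrap m j = j.
Proof. by move=> lt_jm; rewrite /Defs.wrap modz_small. Qed.

Lemma wrapE (m : nat) (k : int) : (0 < m)%N -> (Defs.wrap m k)%:Z = k - (k %/ m)%Z * m.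
Proof. by move=> m_gt0; rewrite /Defs.wrap gez0_abs // modz_ge0 // eqz_nat -lt0n. Qed.

Lemma wrapR (R : pzRingType) (m : nat) (k : int) : (0 < m)%N ->
  ((Defs.wrap m k)%:R : R) = k%:~R - (k %/ m)%Z%:~R * m%:R.
Proof. by move=> m_gt0; rewrite -[m%:R]/(m%:~R) -intrM -intrB -wrapE. Qed.

Section StaggeredGrid.
Variables (R : realType) (mx my : nat) (dxi deta : R) (X : R * R -> R * R).

Lemma Fe_periodic (ue : nat -> nat -> R * R) (k l : int) (eps : R) :
  Fe mx my dxi deta X ue (k + mx) l eps = Fe mx my dxi deta X ue k l eps.
Proof. by rewrite /Fe /Defs.wrap modzDr. Qed.

Lemma Fn_periodic (un : nat -> nat -> R * R) (k l : int) (eps : R) :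
  Fn mx my dxi deta X un k (l + my) eps = Fn mx my dxi deta X un k l eps.
Proof. by rewrite /Fn /Defs.wrap modzDr. Qed.

Lemma sum_flux_differences_eq0 (ue un : nat -> nat -> R * R) (s t : int) (eps : R) :
  \sum_(i < mx) \sum_(j < my)
    ((Fe mx my dxi deta X ue (i%:Z + s) j eps - Fe mx my dxi deta X ue (i%:Z + t) j eps)
     + (Fn mx my dxi deta X un i (j%:Z + s) eps - Fn mx my dxi deta X un i (j%:Z + t) eps))
  = 0.
Proof.
under eq_bigr do rewrite big_split; rewrite big_split /= exchange_big /=.
rewrite big1 ?add0r => [|j _].
  by rewrite big1 // => i _; exact: (sumB_shift_periodic s t (Fn_periodic un i ^~ eps)).
exact: (sumB_shift_periodic s t (fun k => Fe_periodic ue k j eps)).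
Qed.

Lemma dVc_neq0 (i j : nat) : dxi != 0 -> deta != 0 ->
  jacdet X (i%:R * dxi, j%:R * deta) != 0 -> dVc dxi deta X i j != 0.
Proof. by move=> *; rewrite /dVc !mulf_neq0 ?normr_eq0. Qed.

Lemma sum_dVc_DIV_eq0 (K : nat) (alpha : nat -> R) (ue un : nat -> nat -> R * R) :
  (forall i j : nat, dVc dxi deta X i j != 0) ->
  \sum_(i < mx) \sum_(j < my)
    dVc dxi deta X i j * DIV mx my dxi deta X K alpha ue un i j = 0.
Proof.
move=> dVc_nz.
have dVc_half i j : dVc dxi deta X i j * (1 / (2 * dVc dxi deta X i j)) = 1 / 2.
  by field; rewrite dVc_nz.
under eq_bigr => i _ do under eq_bigr => j _ do rewrite /DIV mulrA dVc_half.
under eq_bigr do rewrite -mulr_sumr.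
rewrite -mulr_sumr; under eq_bigr do rewrite exchange_big.
rewrite exchange_big big1 ?mulr0 // => k _ /=.
under eq_bigr do rewrite -mulr_sumr.
have flux0 := sum_flux_differences_eq0 ue un k (- k%:Z - 1) (k%:R + 1 / 2).
rewrite -mulr_sumr -[RHS](mulr0 (alpha k)) -[X in _ = _ * X]flux0; congr (_ * _).
apply: eq_bigr => i _; apply: eq_bigr => j _.
by rewrite -!addrA.
Qed.

Lemma face_offset_add (i k : nat) (h : R) :
  ((i%:Z + k%:Z)%:~R + 1 / 2) * h = i%:R * h + (k%:R + 1 / 2) * h.
Proof. by rewrite intrD; ring. Qed.

Lemma face_offset_sub (i k : nat) (h : R) :
  ((i%:Z - k%:Z - 1)%:~R + 1 / 2) * h = i%:R * h - (k%:R + 1 / 2) * h.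
Proof. by rewrite !intrB mulr1z; field. Qed.

Lemma Fe_const (ue : nat -> nat -> R * R) (a c : R * R) (k : int) (j : nat) (eps : R) :
  (forall xi eta, X (xi + mx%:R * dxi, eta) - X (xi, eta) = a) ->
  (0 < mx)%N -> (j < my)%N ->
  (forall i j, (i < mx)%N -> (j < my)%N -> ue i j = c) ->
  Fe mx my dxi deta X ue k j eps =
    - (1 / eps) * dot (perp (X ((k%:~R + 1 / 2) * dxi, j%:R * deta + eps * deta)
                            - X ((k%:~R + 1 / 2) * dxi, j%:R * deta - eps * deta))) c.
Proof.
move=> X_per mx_gt0 lt_jmy ue_c; rewrite /Fe /= wrap_small // ue_c ?wrap_lt //.
have -> : ((Defs.wrap mx k)%:R + 1 / 2) * dxi
          = (k%:~R + 1 / 2) * dxi + (- (k %/ mx)%Z)%:~R * (mx%:R * dxi).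
  by rewrite wrapR // intrN; ring.
by rewrite (quasiperiodic_shiftB (X_per ^~ _) (X_per ^~ _)).
Qed.

Lemma Fn_const (un : nat -> nat -> R * R) (b c : R * R) (i : nat) (l : int) (eps : R) :
  (forall xi eta, X (xi, eta + my%:R * deta) - X (xi, eta) = b) ->
  (0 < my)%N -> (i < mx)%N ->
  (forall i j, (i < mx)%N -> (j < my)%N -> un i j = c) ->
  Fn mx my dxi deta X un i l eps =
    (1 / eps) * dot (perp (X (i%:R * dxi + eps * dxi, (l%:~R + 1 / 2) * deta)
                          - X (i%:R * dxi - eps * dxi, (l%:~R + 1 / 2) * deta))) c.
Proof.
move=> X_per my_gt0 lt_imx un_c; rewrite /Fn /= wrap_small // un_c ?wrap_lt //.
have -> : ((Defs.wrap my l)%:R + 1 / 2) * deta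
          = (l%:~R + 1 / 2) * deta + (- (l %/ my)%Z)%:~R * (my%:R * deta).
  by rewrite wrapR // intrN; ring.
by rewrite (quasiperiodic_shiftB (X_per _) (X_per _)).
Qed.

Lemma corner_fluxes_cancel (P Q S T c : R * R) (w : R) :
  - w * dot (perp (P - Q)) c - - w * dot (perp (S - T)) c
  + w * dot (perp (P - S)) c - w * dot (perp (Q - T)) c = 0.
Proof. by case: P Q S T c => [? ?] [? ?] [? ?] [? ?] [? ?]; rewrite /dot /perp /=; ring. Qed.

Lemma DIV_const_eq0 (K : nat) (alpha : nat -> R) (ue un : nat -> nat -> R * R)
    (a b c : R * R) (i j : nat) :
  (forall xi eta, X (xi + mx%:R * dxi, eta) - X (xi, eta) = a) ->
  (forall xi eta, X (xi, eta + my%:R * deta) - X (xi, eta) = b) ->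
  (forall i j, (i < mx)%N -> (j < my)%N -> ue i j = c /\ un i j = c) ->
  (i < mx)%N -> (j < my)%N ->
  DIV mx my dxi deta X K alpha ue un i j = 0.
Proof.
move=> X_perx X_pery uc lt_imx lt_jmy.
have mx_gt0 : (0 < mx)%N by apply: leq_ltn_trans lt_imx.
have my_gt0 : (0 < my)%N by apply: leq_ltn_trans lt_jmy.
have ue_c i' j' lt_i' lt_j' := (uc i' j' lt_i' lt_j').1.
have un_c i' j' lt_i' lt_j' := (uc i' j' lt_i' lt_j').2.
rewrite /DIV big1 ?mulr0 // => k _ /=.
rewrite !(Fe_const _ _ X_perx mx_gt0 lt_jmy ue_c).
rewrite !(Fn_const _ _ X_pery my_gt0 lt_imx un_c).
by rewrite !(face_offset_add, face_offset_sub) corner_fluxes_cancel mulr0.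
Qed.

End StaggeredGrid.

Theorem mainTheorem2 (R : realType) (mx my : nat) (dxi deta : R)
    (X : R * R -> R * R) (K : nat) (alpha : nat -> R) :
  (0 < mx)%N -> (0 < my)%N -> 0 < dxi -> 0 < deta ->
  smooth X ->
  (forall p : R * R, jacdet X p != 0) ->
  (exists a : R * R, forall xi eta : R,
      X (xi + mx%:R * dxi, eta) - X (xi, eta) = a) ->
  (exists b : R * R, forall xi eta : R,
      X (xi, eta + my%:R * deta) - X (xi, eta) = b) ->
  (0 < K)%N ->
  (forall ue un : nat -> nat -> R * R,
      \sum_(i < mx) \sum_(j < my)
         dVc dxi deta X i j * DIV mx my dxi deta X K alpha ue un i j = 0)
  /\
  (forall (ue un : nat -> nat -> R * R) (c : R * R),
      (forall i j : nat, (i < mx)%N -> (j < my)%N -> ue i j = c /\ un i j = c) ->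
      forall i j : nat, (i < mx)%N -> (j < my)%N ->
        DIV mx my dxi deta X K alpha ue un i j = 0).
Proof.
move=> _ _ dxi_gt0 deta_gt0 _ jac_neq0 [a X_perx] [b X_pery] _.
split=> [ue un | ue un c uc i j lt_imx lt_jmy].
  by apply: sum_dVc_DIV_eq0 => i j; apply: dVc_neq0; rewrite ?jac_neq0 // lt0r_neq0.
exact: DIV_const_eq0 X_perx X_pery uc lt_imx lt_jmy.
Qed.
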